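(* Under the Setting, Algorithm and Strong convexity assumption described in the context, let $\{x_k\}_{k\ge1}$ be generated by the inexact CSA algorithm with policy (P2) and output $\bar x_{N,s}=\sum_{k\in\mathcal B}\rho_kx_k/\sum_{k\in\mathcal B}\rho_k$. Then for any $N\ge1$, with $K:=\max\{\mu_f,\mu_g\}\max\{L_f^2/\mu_f^2,L_{g,\mathcal X}^2/\mu_g^2\}$, $$f(\bar x_{N,s})-f(x^* )\le\frac{8L}{N+1}K,\qquad G(\bar x_{N,s})\le\frac{8L}{N}K+\frac{\sum_{k\in\mathcal B}k\,\varepsilon_k}{\sum_{k\in\mathcal B}k}.$$
   Context: Setting. $\mathcal X\subset\mathbb R^n$ is convex and compact; $f:\mathcal X\to\mathbb R$ is convex and $L_f$-Lipschitz; $\Delta\subset\mathbb R^d$ is compact; $g:\mathcal X\times\Delta\to\mathbb R$ is such that for every $\delta\in\Delta$, $x\mapsto g(x,\delta)$ is convex and $L_{g,\mathcal X}$-Lipschitz, and for every $x\in\mathcal X$, $\delta\mapsto g(x,\delta)$ is $L_{g,\Delta}$-Lipschitz. Let $G(x):=\max_{\delta\in\Delta}g(x,\delta)$ and assume the problem $\min_{x\in\mathcal X}\{f(x):G(x)\le0\}$ has an optimal solution $x^*$. Norms are Euclidean. $f'(x)$ denotes a subgradient of $f$ at $x$ and $g'(x,\delta)$ a subgradient of $g(\cdot,\delta)$ at $x$. Let $\omega_{\mathcal X}:\mathcal X\to\mathbb R$ be continuously differentiable and $1$-strongly convex; $V(x,z):=\omega_{\mathcal X}(z)-\omega_{\mathcal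 X}(x)-\langle\nabla\omega_{\mathcal X}(x),z-x\rangle$; prox-mapping $P_{x,\mathcal X}(y):=\arg\min_{z\in\mathcal X}\{\langle y,z\rangle+V(x,z)\}$; $D_{\mathcal X}:=\sqrt{\max_{x,z\in\mathcal X}V(x,z)}$. Algorithm (inexact CSA). Inputs: $N\ge1$, $x_1\in\mathcal X$, tolerances $\eta_k>0$, step-sizes $\gamma_k>0$. For $k=1,\dots,N$: choose some $\delta_k\in\Delta$ (an approximate maximizer of $g(x_k,\cdot)$); set $h_k=f'(x_k)$ if $g(x_k,\delta_k)\le\eta_k$ and $h_k=g'(x_k,\delta_k)$ otherwise; set $x_{k+1}=P_{x_k,\mathcal X}(\gamma_kh_k)$. For $1\le s\le N$ let $I=\{s,\dots,N\}$, $\mathcal B:=\{k\in I: g(x_k,\delta_k)\le\eta_k\}$, $\mathcal N:=I\setminus\mathcal B$. The cut-generation errors are $\varepsilon_k:=G(x_k)-g(x_k,\delta_k)\ge0$. Strong convexity assumption: $f$ is strongly convex with parameter $\mu_f>0$ (i.e. $f(x)\ge f(z)+\langle f'(z),x-z\rangle+\frac{\mu_f}{2}\|x-z\|^2$), each $g(\cdot,\delta)$ is strongly convex with parameter $\mu_g>0$ uniformly in $\delta$, and there is $L>0$ with $V(x,z)\le\frac L2\|x-z\|^2$ for all $x,z\in\mathcal X$. Define $a_k=\mu_f\gamma_k/L$ if $g(x_k,\delta_k)\le\eta_k$ and $a_k=\mu_g\gamma_k/L$ otherwise; $A_1=1$, $A_k=(1-a_k)A_{k-1}$ for $k\ge2$;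 $\rho_k=\gamma_k/A_k$. Policy (P2): for $k=1,\dots,N$, $\eta_k=\frac{8L}{N}\max\{\mu_f,\mu_g\}\max\{\frac{L_f^2}{\mu_f^2},\frac{L_{g,\mathcal X}^2}{\mu_g^2}\}$, $\gamma_k=\frac{2L}{\mu_f(k+1)}$ if $g(x_k,\delta_k)\le\eta_k$ and $\gamma_k=\frac{2L}{\mu_g(k+1)}$ otherwise, and $s=1$. *)

From Stdlib Require Import Reals Lra.
Open Scope R_scope.

(* Points of R^n are encoded as functions nat -> R; a point lies in R^n when
   all coordinates of index >= n vanish (see inRn). All inner products and
   norms only look at the first n coordinates. *)
Definition vec := nat -> R.

Definition inRn (n : nat) (x : vec) : Prop := forall i, (n <= i)%nat -> x i = 0.

Fixpoint sum_lt (n : nat) (F : nat -> R) : R :=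
  match n with O => 0 | S m => sum_lt m F + F m end.

Fixpoint sum_to (m : nat) (F : nat -> R) : R :=
  match m with O => 0 | S m' => sum_to m' F + F (S m') end.

Definition dot (n : nat) (x y : vec) : R := sum_lt n (fun i => x i * y i).
Definition vnorm (n : nat) (x : vec) : R := sqrt (dot n x x).
Definition vsub (x y : vec) : vec := fun i => x i - y i.
Definition vcomb (t : R) (x y : vec) : vec := fun i => t * x i + (1 - t) * y i.

Definition convex_set (n : nat) (Sx : vec -> Prop) : Prop :=
  (forall x, Sx x -> inRn n x) /\
  forall x y t, Sx x -> Sx y -> 0 <= t <= 1 -> Sx (vcomb t x y).

Definition seq_compact (n : nat) (Sx : vec -> Prop) : Prop :=
  (forall x, Sx x -> inRn n x) /\
  forall u : nat -> vec, (forall m, Sx (u m)) ->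
    exists (phi : nat -> nat) (l : vec),
      (forall m, (phi m < phi (S m))%nat) /\ Sx l /\
      Un_cv (fun m => vnorm n (vsub (u (phi m)) l)) 0.

Definition convex_on (n : nat) (Sx : vec -> Prop) (F : vec -> R) : Prop :=
  forall x y t, Sx x -> Sx y -> 0 <= t <= 1 ->
    F (vcomb t x y) <= t * F x + (1 - t) * F y.

Definition lipschitz_on (n : nat) (Sx : vec -> Prop) (F : vec -> R) (Lc : R) : Prop :=
  forall x y, Sx x -> Sx y -> Rabs (F x - F y) <= Lc * vnorm n (vsub x y).

Definition subgrad (n : nat) (Sx : vec -> Prop) (F : vec -> R) (x s : vec) : Prop :=
  inRn n s /\ forall y, Sx y -> F y >= F x + dot n s (vsub y x).

Definition strongly_convex_on (n : nat) (Sx : vec -> Prop) (F : vec -> R) (mu : R) : Prop :=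
  forall x z s, Sx x -> Sx z -> subgrad n Sx F z s ->
    F x >= F z + dot n s (vsub x z) + mu / 2 * (vnorm n (vsub x z)) ^ 2.

Definition frechet_at (n : nat) (w : vec -> R) (gw : vec -> vec) (x : vec) : Prop :=
  inRn n (gw x) /\
  forall eps, 0 < eps -> exists del, 0 < del /\
    forall y, inRn n y -> vnorm n (vsub y x) < del ->
      Rabs (w y - w x - dot n (gw x) (vsub y x)) <= eps * vnorm n (vsub y x).

Definition C1_on (n : nat) (Sx : vec -> Prop) (w : vec -> R) (gw : vec -> vec) : Prop :=
  (forall x, Sx x -> frechet_at n w gw x) /\
  forall x eps, Sx x -> 0 < eps -> exists del, 0 < del /\
    forall y, Sx y -> vnorm n (vsub y x) < del -> vnorm n (vsub (gw y) (gw x)) < eps.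

Definition bregV (n : nat) (w : vec -> R) (gw : vec -> vec) (x z : vec) : R :=
  w z - w x - dot n (gw x) (vsub z x).

Definition one_strongly_convex (n : nat) (Sx : vec -> Prop) (w : vec -> R) (gw : vec -> vec) : Prop :=
  forall x z, Sx x -> Sx z -> w z >= w x + dot n (gw x) (vsub z x) + / 2 * (vnorm n (vsub z x)) ^ 2.

Definition is_prox (n : nat) (Sx : vec -> Prop) (w : vec -> R) (gw : vec -> vec)
  (x y z : vec) : Prop :=
  Sx z /\ forall u, Sx u -> dot n y z + bregV n w gw x z <= dot n y u + bregV n w gw x u.

Definition is_max_over (D : vec -> Prop) (h : vec -> R) (v : R) : Prop :=
  (exists d, D d /\ h d = v) /\ forall d, D d -> h d <= v.

(* A_1 = 1, A_k = (1 - a_k) A_{k-1} for k >= 2 (A_0 := 1, unused) *)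
Fixpoint Aseq (a : nat -> R) (k : nat) : R :=
  match k with
  | O => 1
  | S k' => match k' with O => 1 | _ => (1 - a k) * Aseq a k' end
  end.

(* indicator-weighted sum over B = {k in 1..N : g(x_k,delta_k) <= eta_k} *)
Definition sumB (N : nat) (c : nat -> R) (eta : nat -> R) (F : nat -> R) : R :=
  sum_to N (fun k => if Rle_dec (c k) (eta k) then F k else 0).

(* Fix a feasible point u (the theorem uses u = xstar).  Call iteration k
   accepted (k in B) when g(x_k, delta_k) <= eta_k; it then steps along a
   subgradient of f, otherwise along one of g(., delta_k).  Combining the strong
   convexity of the current objective, the three-point inequality of the
   prox-mapping and V(x, z) <= L |x - z|^2 / 2, the gap of iteration k weighted by
   k L / mu_k is at most P_k - P_(k+1) + L^2 M with the potential
   P_k = k (k - 1) / 2 * V(x_k, u).  Telescoping bounds the weighted gaps by N L^2 M.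
   On a rejected iteration the gap exceeds the threshold eta_k, so a budget
   argument shows that B is nonempty and that the gaps on B are small; Jensen's
   inequality for the k-weighted average of the accepted iterates (which is the
   paper's rho-weighted output, since rho_k = k L / mu_f on B) then gives both the
   objective and the constraint bound. *)

From Stdlib Require Import Reals Lra Lia Classical FunctionalExtensionality.
Open Scope R_scope.

Lemma Rdiv_le_0_compat a b : 0 <= a -> 0 < b -> 0 <= a / b.
Proof. intros; unfold Rdiv; apply Rmult_le_pos; [lra | left; apply Rinv_0_lt_compat; lra]. Qed.

Lemma Rdiv_mult_cancel a A B : a <> 0 -> (a * A) / (a * B) = A / B.
Proof.
  intros Ha. unfold Rdiv. rewrite Rinv_mult.
  transitivity ((a * / a) * (A * / B)); [ring | rewrite Rinv_r by exact Ha; ring].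
Qed.

(** * Finite sums over coordinates and the Euclidean inner product *)

Lemma sum_lt_ext n F G : (forall i, F i = G i) -> sum_lt n F = sum_lt n G.
Proof. intros H; induction n; simpl; [reflexivity | rewrite IHn, H; reflexivity]. Qed.

Lemma sum_lt_add n F G : sum_lt n (fun i => F i + G i) = sum_lt n F + sum_lt n G.
Proof. induction n; simpl; [ring | rewrite IHn; ring]. Qed.

Lemma sum_lt_sub n F G : sum_lt n (fun i => F i - G i) = sum_lt n F - sum_lt n G.
Proof. induction n; simpl; [ring | rewrite IHn; ring]. Qed.

Lemma sum_lt_scal n a F : sum_lt n (fun i => a * F i) = a * sum_lt n F.
Proof. induction n; simpl; [ring | rewrite IHn; ring]. Qed.

Lemma sum_lt_nonneg n F : (forall i, 0 <= F i) -> 0 <= sum_lt n F.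
Proof. intros H; induction n; simpl; [lra | specialize (H n); lra]. Qed.

Lemma dot_comm n a b : dot n a b = dot n b a.
Proof. unfold dot. apply sum_lt_ext; intros; ring. Qed.

Lemma dot_ext_r n a b b' : (forall i, b i = b' i) -> dot n a b = dot n a b'.
Proof. intros H; unfold dot; apply sum_lt_ext; intros; rewrite H; ring. Qed.

Lemma dot_sub_r n a b c : dot n a (vsub b c) = dot n a b - dot n a c.
Proof. unfold dot. rewrite <- sum_lt_sub. apply sum_lt_ext; intros; unfold vsub; ring. Qed.

Lemma dot_sub_l n a b c : dot n (vsub b c) a = dot n b a - dot n c a.
Proof. unfold dot. rewrite <- sum_lt_sub. apply sum_lt_ext; intros; unfold vsub; ring. Qed.

Lemma dot_add_sub_l n a b c v :
  dot n (fun i => a i + b i - c i) v = dot n a v + dot n b v - dot n c v.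
Proof. unfold dot. rewrite <- sum_lt_add, <- sum_lt_sub. apply sum_lt_ext; intros; ring. Qed.

Lemma dot_scal_l n t a b : dot n (fun i => t * a i) b = t * dot n a b.
Proof. unfold dot. rewrite <- sum_lt_scal. apply sum_lt_ext; intros; ring. Qed.

Lemma dot_scal_r n t a b : dot n a (fun i => t * b i) = t * dot n a b.
Proof. unfold dot. rewrite <- sum_lt_scal. apply sum_lt_ext; intros; ring. Qed.

Lemma dot_nonneg n a : 0 <= dot n a a.
Proof. unfold dot; apply sum_lt_nonneg; intros; nra. Qed.

(* Young's inequality <a,b> <= (|a|^2 + |b|^2)/2, from |a - b|^2 >= 0. *)
Lemma dot_le_half_squares n a b : dot n a b <= (dot n a a + dot n b b) / 2.
Proof.
  pose proof (dot_nonneg n (vsub a b)) as H.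
  rewrite dot_sub_r, !dot_sub_l, (dot_comm n b a) in H. lra.
Qed.

Lemma vnorm_sq n a : vnorm n a ^ 2 = dot n a a.
Proof. unfold vnorm. apply pow2_sqrt, dot_nonneg. Qed.

Lemma dot_vsub_sym n a b : dot n (vsub a b) (vsub a b) = dot n (vsub b a) (vsub b a).
Proof. rewrite !dot_sub_r, !dot_sub_l, (dot_comm n a b). lra. Qed.

Lemma vnorm_sym n a b : vnorm n (vsub a b) = vnorm n (vsub b a).
Proof. unfold vnorm; rewrite dot_vsub_sym; reflexivity. Qed.

Lemma vsub_vcomb t u z i : vsub (vcomb t u z) z i = t * vsub u z i.
Proof. unfold vsub, vcomb; ring. Qed.

Lemma vnorm_vcomb n t u z :
  0 <= t -> vnorm n (vsub (vcomb t u z) z) = t * vnorm n (vsub u z).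
Proof.
  intros Ht. unfold vnorm, dot.
  rewrite (sum_lt_ext n _ (fun i => (t * t) * (vsub u z i * vsub u z i)))
    by (intros; rewrite vsub_vcomb; ring).
  rewrite sum_lt_scal, sqrt_mult by (nra || apply dot_nonneg).
  rewrite sqrt_square by lra. reflexivity.
Qed.

Lemma bregV_nonneg n X w gw y z :
  one_strongly_convex n X w gw -> X y -> X z -> 0 <= bregV n w gw y z.
Proof.
  intros Hsc Hy Hz. pose proof (Hsc y z Hy Hz). unfold bregV.
  pose proof (pow2_ge_0 (vnorm n (vsub z y))). lra.
Qed.

(** * The prox-mapping *)

Lemma frechet_along_segment n w gw z u :
  frechet_at n w gw z -> (forall t, 0 <= t <= 1 -> inRn n (vcomb t u z)) ->
  forall eps, 0 < eps -> exists t, 0 < t <= 1 /\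
    w (vcomb t u z) - w z - t * dot n (gw z) (vsub u z) <= t * eps.
Proof.
  intros [_ Hfr] Hseg eps Heps.
  set (D := vnorm n (vsub u z)).
  assert (HD : 0 <= D) by apply sqrt_pos.
  destruct (Hfr (eps / (D + 1))) as [del [Hdel Hrem]].
  { apply Rdiv_lt_0_compat; lra. }
  set (t := Rmin 1 (del / (2 * (D + 1)))).
  assert (Ht0 : 0 < t) by (apply Rmin_glb_lt; [lra | apply Rdiv_lt_0_compat; lra]).
  assert (Ht1 : t <= 1) by apply Rmin_l.
  assert (Htdel : t * (2 * (D + 1)) <= del).
  { pose proof (Rmin_r 1 (del / (2 * (D + 1)))) as Hr. fold t in Hr.
    apply (Rmult_le_compat_r (2 * (D + 1))) in Hr; [| lra].
    unfold Rdiv in Hr; rewrite Rmult_assoc, Rinv_l in Hr; lra. }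
  exists t; split; [lra |].
  assert (Hnorm : vnorm n (vsub (vcomb t u z) z) = t * D) by (apply vnorm_vcomb; lra).
  assert (Hlin : dot n (gw z) (vsub (vcomb t u z) z) = t * dot n (gw z) (vsub u z)).
  { rewrite <- dot_scal_r. apply dot_ext_r; intros; apply vsub_vcomb. }
  specialize (Hrem (vcomb t u z) (Hseg t ltac:(lra)) ltac:(rewrite Hnorm; nra)).
  rewrite Hnorm, Hlin in Hrem.
  pose proof (Rle_trans _ _ _ (Rle_abs _) Hrem) as Hw.
  assert (eps / (D + 1) * (t * D) <= t * eps).
  { replace (eps / (D + 1) * (t * D)) with (t * eps * (D / (D + 1))) by (field; lra).
    assert (D / (D + 1) <= 1).
    { apply (Rmult_le_reg_r (D + 1)); [lra |]. unfold Rdiv.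
      rewrite Rmult_assoc, Rinv_l; lra. }
    assert (0 <= t * eps) by nra. nra. }
  lra.
Qed.

(* First-order optimality of z = P_x(y): <y + grad w(z) - grad w(x), u - z> >= 0
   for every u in X; otherwise a small step from z towards u would decrease the
   prox objective. *)
Lemma prox_first_order n X w gw x y z u :
  convex_set n X -> C1_on n X w gw -> is_prox n X w gw x y z -> X u ->
  0 <= dot n (fun i => y i + gw z i - gw x i) (vsub u z).
Proof.
  intros HX Hw [Hz Hmin] Hu.
  set (Q := dot n (fun i => y i + gw z i - gw x i) (vsub u z)).
  destruct (Rle_or_lt 0 Q) as [HQ | HQ]; [exact HQ | exfalso].
  assert (Hseg : forall t, 0 <= t <= 1 -> X (vcomb t u z))
    by (intros t Ht; apply (proj2 HX); auto).
  destruct (frechet_along_segment n w gw z u (proj1 Hw z Hz)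
              (fun t Ht => proj1 HX _ (Hseg t Ht)) (- Q / 2) ltac:(lra))
    as [t [Ht Hrem]].
  specialize (Hmin (vcomb t u z) (Hseg t ltac:(lra))). unfold bregV in Hmin.
  assert (Hlin : forall a, dot n a (vcomb t u z) - dot n a z = t * dot n a (vsub u z)).
  { intros a. rewrite <- dot_sub_r, <- dot_scal_r. apply dot_ext_r; intros; apply vsub_vcomb. }
  pose proof (Hlin y) as Ey. pose proof (Hlin (gw x)) as Ex.
  assert (EQ : Q = dot n y (vsub u z) + dot n (gw z) (vsub u z) - dot n (gw x) (vsub u z))
    by apply dot_add_sub_l.
  rewrite !(dot_sub_r n (gw x)) in Hmin.
  assert (Hdec : 0 <= t * Q / 2) by (rewrite EQ; nra).
  nra.
Qed.

Lemma prox_three_point n X w gw x y z u :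
  convex_set n X -> C1_on n X w gw -> is_prox n X w gw x y z -> X u ->
  dot n y (vsub z u) <= bregV n w gw x u - bregV n w gw x z - bregV n w gw z u.
Proof.
  intros HX Hw Hp Hu. pose proof (prox_first_order _ _ _ _ _ _ _ _ HX Hw Hp Hu) as H.
  rewrite dot_add_sub_l in H. unfold bregV. rewrite !dot_sub_r in *. lra.
Qed.

Lemma prox_descent n X w gw x u z hv gam :
  convex_set n X -> C1_on n X w gw -> one_strongly_convex n X w gw ->
  X x -> X u -> is_prox n X w gw x (fun i => gam * hv i) z ->
  gam * dot n hv (vsub x u) <= bregV n w gw x u - bregV n w gw z u + gam ^ 2 * dot n hv hv / 2.
Proof.
  intros HX Hw Hsc Hx Hu Hp.
  pose proof (prox_three_point _ _ _ _ _ _ _ _ HX Hw Hp Hu) as H3.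
  pose proof (Hsc x z Hx (proj1 Hp)) as Hs. rewrite vnorm_sq in Hs.
  pose proof (dot_le_half_squares n (fun i => gam * hv i) (vsub x z)) as Hy.
  rewrite dot_vsub_sym, !dot_scal_l, dot_scal_r in Hy. rewrite dot_scal_l in H3.
  unfold bregV in *. rewrite !dot_sub_r in *. nra.
Qed.

(** * Finite sums over iterations 1..m *)

Lemma sum_to_ext m F G :
  (forall k, (1 <= k <= m)%nat -> F k = G k) -> sum_to m F = sum_to m G.
Proof.
  induction m; intros H; simpl; [reflexivity |].
  rewrite IHm by (intros; apply H; lia). rewrite H by lia. reflexivity.
Qed.

Lemma sum_to_add m F G : sum_to m (fun k => F k + G k) = sum_to m F + sum_to m G.
Proof. induction m; simpl; [ring | rewrite IHm; ring]. Qed.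

Lemma sum_to_scal m a F : sum_to m (fun k => a * F k) = a * sum_to m F.
Proof. induction m; simpl; [ring | rewrite IHm; ring]. Qed.

Lemma sum_to_le m F G :
  (forall k, (1 <= k <= m)%nat -> F k <= G k) -> sum_to m F <= sum_to m G.
Proof.
  induction m; intros H; simpl; [lra |].
  assert (sum_to m F <= sum_to m G) by (apply IHm; intros; apply H; lia).
  assert (F (S m) <= G (S m)) by (apply H; lia). lra.
Qed.

Lemma sum_to_lt m F G : (1 <= m)%nat ->
  (forall k, (1 <= k <= m)%nat -> F k < G k) -> sum_to m F < sum_to m G.
Proof.
  intros Hm H. destruct m; [lia |]. simpl.
  assert (sum_to m F <= sum_to m G) by (apply sum_to_le; intros; left; apply H; lia).
  assert (F (S m) < G (S m)) by (apply H; lia). lra.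
Qed.

Lemma sum_to_zero m F : (forall k, (1 <= k <= m)%nat -> F k = 0) -> sum_to m F = 0.
Proof.
  induction m; intros H; simpl; [reflexivity |].
  rewrite IHm by (intros; apply H; lia). rewrite H by lia. ring.
Qed.

Lemma sum_to_nonneg m F : (forall k, (1 <= k <= m)%nat -> 0 <= F k) -> 0 <= sum_to m F.
Proof.
  intros H. rewrite <- (sum_to_zero m (fun _ => 0)) by reflexivity.
  apply sum_to_le; auto.
Qed.

Lemma sum_to_zero_inv m F : (forall k, (1 <= k <= m)%nat -> 0 <= F k) ->
  sum_to m F = 0 -> forall k, (1 <= k <= m)%nat -> F k = 0.
Proof.
  induction m; intros H H0 k Hk; [lia |]. simpl in H0.
  assert (0 <= sum_to m F) by (apply sum_to_nonneg; intros; apply H; lia).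
  assert (0 <= F (S m)) by (apply H; lia).
  destruct (Nat.eq_dec k (S m)) as [-> | Hne]; [lra |].
  apply IHm; [intros; apply H; lia | lra | lia].
Qed.

Lemma sum_to_id m : sum_to m (fun k => INR k) = INR m * (INR m + 1) / 2.
Proof.
  induction m; [simpl; lra |].
  change (sum_to (S m) (fun k => INR k)) with (sum_to m (fun k => INR k) + INR (S m)).
  rewrite IHm, S_INR. field.
Qed.

Lemma telescope m (P W : nat -> R) C :
  (forall k, (1 <= k <= m)%nat -> P k <= W k - W (S k) + C) ->
  sum_to m P <= W 1%nat - W (S m) + INR m * C.
Proof.
  induction m; intros H; simpl sum_to; [simpl; lra |].
  assert (sum_to m P <= W 1%nat - W (S m) + INR m * C) by (apply IHm; intros; apply H; lia).
  assert (P (S m) <= W (S m) - W (S (S m)) + C) by (apply H; lia).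
  rewrite S_INR. lra.
Qed.

Lemma jensen n (X : vec -> Prop) (F : vec -> R) (x : nat -> vec) (p : nat -> R) m :
  convex_set n X -> convex_on n X F ->
  (forall k, (1 <= k <= m)%nat -> 0 <= p k /\ X (x k)) -> 0 < sum_to m p ->
  X (fun i => sum_to m (fun k => p k * x k i) / sum_to m p) /\
  F (fun i => sum_to m (fun k => p k * x k i) / sum_to m p)
    <= sum_to m (fun k => p k * F (x k)) / sum_to m p.
Proof.
  intros HX HF. induction m; intros Hp Hs; simpl in Hs; [lra |].
  assert (HS0 : 0 <= sum_to m p) by (apply sum_to_nonneg; intros; apply Hp; lia).
  destruct (Hp (S m) ltac:(lia)) as [Hpm Hxm].
  destruct HS0 as [HS0 | HS0].
  - (* the new average is a convex combination of the old one and x_(m+1) *)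
    destruct IHm as [IX IF]; [intros; apply Hp; lia | exact HS0 |].
    set (S0 := sum_to m p) in *. set (t := S0 / (S0 + p (S m))).
    assert (Ht : 0 <= t <= 1).
    { unfold t; split; [apply Rdiv_le_0_compat; lra |].
      apply (Rmult_le_reg_r (S0 + p (S m))); [lra |].
      unfold Rdiv; rewrite Rmult_assoc, Rinv_l; lra. }
    assert (E : (fun i => sum_to (S m) (fun k => p k * x k i) / sum_to (S m) p)
                = vcomb t (fun i => sum_to m (fun k => p k * x k i) / S0) (x (S m))).
    { apply functional_extensionality; intros i. unfold vcomb, t. simpl. fold S0. field. lra. }
    rewrite E. split; [apply (proj2 HX); auto |].
    eapply Rle_trans; [apply HF; auto |]. simpl. fold S0.
    apply (Rmult_le_compat_l t) in IF; [| lra].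
    replace (t * (sum_to m (fun k => p k * F (x k)) / S0)) with
      (sum_to m (fun k => p k * F (x k)) / (S0 + p (S m))) in IF by (unfold t; field; lra).
    replace (1 - t) with (p (S m) / (S0 + p (S m))) by (unfold t; field; lra).
    replace ((sum_to m (fun k => p k * F (x k)) + p (S m) * F (x (S m))) / (S0 + p (S m)))
      with (sum_to m (fun k => p k * F (x k)) / (S0 + p (S m))
            + p (S m) / (S0 + p (S m)) * F (x (S m))) by (field; lra).
    lra.
  - (* all earlier weights vanish: the average is x_(m+1) itself *)
    assert (Hz := sum_to_zero_inv m p ltac:(intros; apply Hp; lia) (eq_sym HS0)).
    assert (Hdrop : forall G : nat -> R, sum_to m (fun k => p k * G k) = 0)
      by (intros; apply sum_to_zero; intros; rewrite Hz by auto; ring).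
    assert (E : (fun i => sum_to (S m) (fun k => p k * x k i) / sum_to (S m) p) = x (S m)).
    { apply functional_extensionality; intros i. simpl.
      rewrite <- HS0, (Hdrop (fun k => x k i)). field. lra. }
    rewrite E. split; auto. simpl.
    rewrite <- HS0, (Hdrop (fun k => F (x k))). right; field; lra.
Qed.

(** * Sums over the accepted iterations B = {k : c k <= eta k} *)

Lemma sumB_ext N c eta F G : (forall k, (1 <= k <= N)%nat -> c k <= eta k -> F k = G k) ->
  sumB N c eta F = sumB N c eta G.
Proof.
  intros H. apply sum_to_ext; intros k Hk.
  destruct (Rle_dec (c k) (eta k)); [apply H |]; auto.
Qed.

Lemma sumB_le N c eta F G : (forall k, (1 <= k <= N)%nat -> c k <= eta k -> F k <= G k) ->
  sumB N c eta F <= sumB N c eta G.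
Proof.
  intros H. apply sum_to_le; intros k Hk.
  destruct (Rle_dec (c k) (eta k)); [apply H | right]; auto.
Qed.

Lemma sumB_scal N c eta a F : sumB N c eta (fun k => a * F k) = a * sumB N c eta F.
Proof.
  unfold sumB. rewrite <- sum_to_scal.
  apply sum_to_ext; intros k _. destruct (Rle_dec (c k) (eta k)); ring.
Qed.

Lemma sumB_lin N c eta a b F G :
  sumB N c eta (fun k => a * F k + b * G k) = a * sumB N c eta F + b * sumB N c eta G.
Proof.
  unfold sumB. rewrite <- !sum_to_scal, <- sum_to_add.
  apply sum_to_ext; intros k _. destruct (Rle_dec (c k) (eta k)); ring.
Qed.

Lemma sum_to_split_B N c eta F :
  sum_to N F = sumB N c eta F + sum_to N (fun k => if Rle_dec (c k) (eta k) then 0 else F k).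
Proof.
  unfold sumB. rewrite <- sum_to_add.
  apply sum_to_ext; intros k _. destruct (Rle_dec (c k) (eta k)); ring.
Qed.

Lemma jensen_B n X F (x : nat -> vec) N c eta :
  convex_set n X -> convex_on n X F -> (forall k, (1 <= k <= N)%nat -> X (x k)) ->
  0 < sumB N c eta (fun k => INR k) ->
  let xavg := fun i => sumB N c eta (fun k => INR k * x k i) / sumB N c eta (fun k => INR k) in
  X xavg /\ F xavg <= sumB N c eta (fun k => INR k * F (x k)) / sumB N c eta (fun k => INR k).
Proof.
  intros HX HF Hx Hpos xavg.
  set (p := fun k => if Rle_dec (c k) (eta k) then INR k else 0).
  assert (Ep : forall G, sumB N c eta (fun k => INR k * G k) = sum_to N (fun k => p k * G k)).
  { intros G. apply sum_to_ext; intros k _. unfold p. destruct (Rle_dec (c k) (eta k)); ring. }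
  assert (E1 : sumB N c eta (fun k => INR k) = sum_to N p)
    by (apply sum_to_ext; intros k _; unfold p; destruct (Rle_dec (c k) (eta k)); ring).
  assert (Exavg : xavg = fun i => sum_to N (fun k => p k * x k i) / sum_to N p).
  { apply functional_extensionality; intros i. unfold xavg. rewrite E1, Ep. reflexivity. }
  rewrite Exavg, Ep, E1. rewrite E1 in Hpos.
  apply (jensen n); auto. intros k Hk. split; [| auto].
  unfold p. destruct (Rle_dec (c k) (eta k)); [apply pos_INR | lra].
Qed.

Lemma budget_on_B N c eta (Phi : nat -> R) C :
  (1 <= N)%nat -> 0 <= C -> sum_to N Phi <= INR N * C ->
  (forall k, (1 <= k <= N)%nat -> ~ c k <= eta k -> 8 * C * INR k / INR N < Phi k) ->
  (exists k, (1 <= k <= N)%nat /\ c k <= eta k) /\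
  sumB N c eta Phi <= 8 * C / (INR N + 1) * sumB N c eta (fun k => INR k).
Proof.
  intros HN HC Hsum Hrej.
  assert (HN1 : 1 <= INR N) by (apply (le_INR 1 N); lia).
  set (PhiR := sum_to N (fun k => if Rle_dec (c k) (eta k) then 0 else Phi k)).
  pose proof (sum_to_split_B N c eta Phi) as Esplit. fold PhiR in Esplit.
  split.
  - apply NNPP; intros Hne.
    assert (Hall : forall k, (1 <= k <= N)%nat -> ~ c k <= eta k)
      by (intros k Hk HB; apply Hne; eauto).
    assert (HB0 : sumB N c eta Phi = 0).
    { apply sum_to_zero; intros k Hk.
      destruct (Rle_dec (c k) (eta k)); [exfalso; eapply Hall; eauto | reflexivity]. }
    assert (Hlt : sum_to N (fun k => 8 * C / INR N * INR k) < PhiR).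
    { apply sum_to_lt; [lia |]. intros k Hk.
      destruct (Rle_dec (c k) (eta k)) as [HB | _]; [exfalso; eapply Hall; eauto |].
      pose proof (Hrej k Hk (Hall k Hk)).
      replace (8 * C / INR N * INR k) with (8 * C * INR k / INR N) by (field; lra). lra. }
    rewrite sum_to_scal, sum_to_id in Hlt.
    replace (8 * C / INR N * (INR N * (INR N + 1) / 2)) with (4 * C * (INR N + 1)) in Hlt
      by (field; lra).
    nra.
  - assert (Hlow : sum_to N (fun k => 8 * C / (INR N + 1) * INR k)
                   <= PhiR + 8 * C / (INR N + 1) * sumB N c eta (fun k => INR k)).
    { unfold PhiR, sumB. rewrite <- sum_to_scal, <- sum_to_add.
      apply sum_to_le; intros k Hk.
      assert (Hk1 : 1 <= INR k) by (apply (le_INR 1 k); lia).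
      destruct (Rle_dec (c k) (eta k)) as [HB | HB]; [lra |].
      pose proof (Hrej k Hk HB).
      assert (8 * C / (INR N + 1) * INR k <= 8 * C * INR k / INR N).
      { unfold Rdiv. rewrite (Rmult_comm (8 * C) (/ (INR N + 1))), Rmult_assoc.
        rewrite (Rmult_comm (8 * C * INR k) (/ INR N)).
        apply Rmult_le_compat_r; [nra |]. apply Rinv_le_contravar; lra. }
      lra. }
    rewrite sum_to_scal, sum_to_id in Hlow.
    replace (8 * C / (INR N + 1) * (INR N * (INR N + 1) / 2)) with (4 * INR N * C) in Hlow
      by (field; lra).
    nra.
Qed.

(** * Step sizes and weights of policy (P2) *)

Lemma Aseq_closed_form (a : nat -> R) m :
  (forall k, (1 <= k <= m)%nat -> a k = 2 / (INR k + 1)) ->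
  forall k, (1 <= k <= m)%nat -> Aseq a k = 2 / (INR k * (INR k + 1)).
Proof.
  intros Ha k Hk. induction k; [lia |]. destruct k.
  - simpl. field.
  - change (Aseq a (S (S k))) with ((1 - a (S (S k))) * Aseq a (S k)).
    rewrite IHk, Ha by lia. rewrite !S_INR.
    pose proof (pos_INR k). field. lra.
Qed.

(* The arithmetic of one iteration with step gam = 2L / (mu (s + 1)): combining
   strong convexity (P <= D - mu e / 2), the prox descent inequality and
   V_k <= L e / 2, the gap P weighted by s L / mu telescopes in the potential
   s (s - 1) / 2 * V_s, up to the error L^2 |h|^2 / mu^2 <= L^2 M. *)
Lemma weighted_step_arith (s L mu gam hh P D Vk Vk1 e M : R) :
  1 <= s -> 0 < L -> 0 < mu -> gam = 2 * L / (mu * (s + 1)) -> 0 <= hh ->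
  hh / mu ^ 2 <= M -> P <= D - mu / 2 * e -> gam * D <= Vk - Vk1 + gam ^ 2 * hh / 2 ->
  Vk <= L / 2 * e ->
  s * L / mu * P <= s * (s - 1) / 2 * Vk - (s + 1) * s / 2 * Vk1 + L ^ 2 * M.
Proof.
  intros Hs HL Hmu Hg Hhh HM H1 H2 H3.
  set (q := s * (s + 1) / 2).
  assert (Hgam : 0 < gam) by (rewrite Hg; apply Rdiv_lt_0_compat; nra).
  assert (Hcontract : gam * P <= (1 - 2 / (s + 1)) * Vk - Vk1 + gam ^ 2 * hh / 2).
  { assert (gam * mu / 2 * e >= 2 / (s + 1) * Vk).
    { replace (gam * mu / 2 * e) with (2 / (s + 1) * (L / 2 * e)) by (rewrite Hg; field; lra).
      apply Rle_ge, Rmult_le_compat_l; [apply Rdiv_le_0_compat; lra | lra]. }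
    nra. }
  assert (Herr : q * (gam ^ 2 * hh / 2) <= L ^ 2 * M).
  { replace (q * (gam ^ 2 * hh / 2)) with (L ^ 2 * (hh / mu ^ 2) * (s / (s + 1)))
      by (unfold q; rewrite Hg; field; lra).
    assert (Hfrac : 0 <= s / (s + 1) <= 1).
    { split; [apply Rdiv_le_0_compat; lra |].
      apply (Rmult_le_reg_r (s + 1)); [lra |]. unfold Rdiv. rewrite Rmult_assoc, Rinv_l; lra. }
    assert (0 <= hh / mu ^ 2) by (apply Rdiv_le_0_compat; nra).
    assert (hh / mu ^ 2 * (s / (s + 1)) <= M) by nra.
    rewrite Rmult_assoc. apply Rmult_le_compat_l; [nra | lra]. }
  replace (s * L / mu * P) with (q * (gam * P)) by (unfold q; rewrite Hg; field; lra).
  apply (Rmult_le_compat_l q) in Hcontract; [| unfold q; nra].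
  replace (s * (s - 1) / 2 * Vk - (s + 1) * s / 2 * Vk1 + L ^ 2 * M) with
    (q * ((1 - 2 / (s + 1)) * Vk - Vk1) + L ^ 2 * M) by (unfold q; field; lra).
  lra.
Qed.

Lemma csa_iteration_bound n X w gw F mu L Lc M u xk xk1 hk gam (k : nat) :
  convex_set n X -> C1_on n X w gw -> one_strongly_convex n X w gw ->
  0 < L -> 0 < mu -> (1 <= k)%nat -> X xk -> X u ->
  bregV n w gw xk u <= L / 2 * (vnorm n (vsub xk u)) ^ 2 ->
  strongly_convex_on n X F mu -> subgrad n X F xk hk ->
  vnorm n hk <= Lc -> Lc ^ 2 / mu ^ 2 <= M ->
  gam = 2 * L / (mu * (INR k + 1)) -> is_prox n X w gw xk (fun i => gam * hk i) xk1 ->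
  INR k * L / mu * (F xk - F u)
    <= INR k * (INR k - 1) / 2 * bregV n w gw xk u
       - (INR k + 1) * INR k / 2 * bregV n w gw xk1 u + L ^ 2 * M.
Proof.
  intros HX Hw Hwsc HL Hmu Hk Hxk Hu HV Hsc Hsub Hh HM Hg Hp.
  assert (Hk1 : 1 <= INR k) by (apply (le_INR 1 k); lia).
  pose proof (Hsc u xk hk Hu Hxk Hsub) as Hstrong.
  rewrite vnorm_sym, !dot_sub_r in Hstrong.
  assert (Hhh : dot n hk hk / mu ^ 2 <= M).
  { rewrite <- vnorm_sq. eapply Rle_trans; [| exact HM].
    unfold Rdiv; apply Rmult_le_compat_r; [left; apply Rinv_0_lt_compat; nra |].
    pose proof (sqrt_pos (dot n hk hk)). unfold vnorm in *. nra. }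
  apply (weighted_step_arith (INR k) L mu gam (dot n hk hk) (F xk - F u)
           (dot n hk (vsub xk u)) _ _ (vnorm n (vsub xk u) ^ 2) M); auto.
  - apply dot_nonneg.
  - rewrite dot_sub_r; lra.
  - exact (prox_descent n X w gw xk u xk1 hk gam HX Hw Hwsc Hxk Hu Hp).
Qed.

(** * Analysis of inexact CSA under policy (P2) *)

Section CSA_policy_P2.

Variables (n : nat) (X Delta : vec -> Prop) (f : vec -> R) (g : vec -> vec -> R)
  (G : vec -> R) (Lf LgX mu_f mu_g L : R) (w : vec -> R) (gw : vec -> vec)
  (u : vec) (N : nat) (x delta h : nat -> vec) (eta gamma : nat -> R).

Hypotheses
  (HX : convex_set n X) (Hfconv : convex_on n X f)
  (Hgconv : forall dl, Delta dl -> convex_on n X (fun y => g y dl))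
  (HG : forall y, X y -> is_max_over Delta (fun dl => g y dl) (G y))
  (Hu : X u) (HGu : G u <= 0)
  (Hw : C1_on n X w gw) (Hwsc : one_strongly_convex n X w gw)
  (Hmuf : 0 < mu_f) (Hmug : 0 < mu_g) (HL : 0 < L)
  (Hfsc : strongly_convex_on n X f mu_f)
  (Hgsc : forall dl, Delta dl -> strongly_convex_on n X (fun y => g y dl) mu_g)
  (HVL : forall y z, X y -> X z -> bregV n w gw y z <= L / 2 * (vnorm n (vsub y z)) ^ 2)
  (HN : (1 <= N)%nat) (Hx1 : X (x 1%nat))
  (Heta : forall k, (1 <= k <= N)%nat ->
     eta k = 8 * L / INR N * (Rmax mu_f mu_g * Rmax (Lf ^ 2 / mu_f ^ 2) (LgX ^ 2 / mu_g ^ 2)))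
  (Hdelta : forall k, (1 <= k <= N)%nat -> Delta (delta k))
  (Hstep_f : forall k, (1 <= k <= N)%nat -> g (x k) (delta k) <= eta k ->
     subgrad n X f (x k) (h k) /\ vnorm n (h k) <= Lf /\
     gamma k = 2 * L / (mu_f * (INR k + 1)))
  (Hstep_g : forall k, (1 <= k <= N)%nat -> ~ (g (x k) (delta k) <= eta k) ->
     subgrad n X (fun y => g y (delta k)) (x k) (h k) /\ vnorm n (h k) <= LgX /\
     gamma k = 2 * L / (mu_g * (INR k + 1)))
  (Hprox : forall k, (1 <= k <= N)%nat ->
     is_prox n X w gw (x k) (fun i => gamma k * h k i) (x (S k))).

Definition cut k := g (x k) (delta k).

(* M bounds |h_k|^2 / mu_k^2 and K = max(mu_f, mu_g) M is the constant of (P2) *)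
Definition Mgrad := Rmax (Lf ^ 2 / mu_f ^ 2) (LgX ^ 2 / mu_g ^ 2).
Definition Kconst := Rmax mu_f mu_g * Mgrad.

Definition gap k :=
  if Rle_dec (cut k) (eta k) then INR k * L / mu_f * (f (x k) - f u)
  else INR k * L / mu_g * (cut k - g u (delta k)).

Definition potential k := INR k * (INR k - 1) / 2 * bregV n w gw (x k) u.

Definition xavg : vec :=
  fun i => sumB N cut eta (fun k => INR k * x k i) / sumB N cut eta (fun k => INR k).

Lemma Mgrad_nonneg : 0 <= Mgrad.
Proof.
  apply Rle_trans with (Lf ^ 2 / mu_f ^ 2); [apply Rdiv_le_0_compat; nra | apply Rmax_l].
Qed.

Lemma iterates_in_X k : (1 <= k <= S N)%nat -> X (x k).
Proof.
  intros Hk. induction k; [lia |]. destruct k; [exact Hx1 |].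
  exact (proj1 (Hprox (S k) ltac:(lia))).
Qed.

Lemma gap_step k : (1 <= k <= N)%nat -> gap k <= potential k - potential (S k) + L ^ 2 * Mgrad.
Proof.
  intros Hk.
  assert (Hxk : X (x k)) by (apply iterates_in_X; lia).
  assert (Epot : potential (S k) = (INR k + 1) * INR k / 2 * bregV n w gw (x (S k)) u)
    by (unfold potential; rewrite S_INR; field).
  rewrite Epot. unfold gap, potential.
  destruct (Rle_dec (cut k) (eta k)) as [HB | HB].
  - destruct (Hstep_f k Hk HB) as [Hsub [Hh Hg]].
    exact (csa_iteration_bound n X w gw f mu_f L Lf Mgrad u (x k) (x (S k)) (h k) (gamma k) k
             HX Hw Hwsc HL Hmuf ltac:(lia) Hxk Hu (HVL _ _ Hxk Hu) Hfsc Hsub Hh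
             (Rmax_l _ _) Hg (Hprox k Hk)).
  - destruct (Hstep_g k Hk HB) as [Hsub [Hh Hg]].
    exact (csa_iteration_bound n X w gw (fun y => g y (delta k)) mu_g L LgX Mgrad u
             (x k) (x (S k)) (h k) (gamma k) k HX Hw Hwsc HL Hmug ltac:(lia) Hxk Hu
             (HVL _ _ Hxk Hu) (Hgsc _ (Hdelta k Hk)) Hsub Hh (Rmax_r _ _) Hg (Hprox k Hk)).
Qed.

(* Telescoping: the potential vanishes at k = 1 and is nonnegative. *)
Lemma gap_sum : sum_to N gap <= INR N * (L ^ 2 * Mgrad).
Proof.
  pose proof (telescope N gap potential (L ^ 2 * Mgrad) gap_step) as HT.
  assert (potential 1%nat = 0) by (unfold potential; simpl INR; lra).
  assert (0 <= potential (S N)).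
  { unfold potential. rewrite S_INR. pose proof (pos_INR N).
    apply Rmult_le_pos; [nra |].
    apply (bregV_nonneg n X); [exact Hwsc | apply iterates_in_X; lia | exact Hu]. }
  lra.
Qed.

(* A rejected iteration has cut value above eta_k while g(u, delta_k) <= G(u) <= 0,
   so its gap exceeds k L eta_k / mu_g >= 8 L^2 M k / N. *)
Lemma gap_rejected k : (1 <= k <= N)%nat -> ~ cut k <= eta k ->
  8 * (L ^ 2 * Mgrad) * INR k / INR N < gap k.
Proof.
  intros Hk HB. unfold gap.
  destruct (Rle_dec (cut k) (eta k)) as [| _]; [contradiction |].
  assert (Hk1 : 1 <= INR k) by (apply (le_INR 1 k); lia).
  assert (HN1 : 1 <= INR N) by (apply (le_INR 1 N); lia).
  assert (Hgu : g u (delta k) <= 0) by (pose proof (proj2 (HG u Hu) _ (Hdelta k Hk)); lra).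
  rewrite Heta in HB by exact Hk. fold Mgrad in HB.
  assert (HK : mu_g * Mgrad <= Rmax mu_f mu_g * Mgrad)
    by (apply Rmult_le_compat_r; [apply Mgrad_nonneg | apply Rmax_r]).
  replace (8 * (L ^ 2 * Mgrad) * INR k / INR N)
    with (INR k * L / mu_g * (8 * L / INR N * (mu_g * Mgrad))) by (field; lra).
  apply Rmult_lt_compat_l; [apply Rdiv_lt_0_compat; nra |].
  assert (8 * L / INR N * (mu_g * Mgrad) <= 8 * L / INR N * (Rmax mu_f mu_g * Mgrad))
    by (apply Rmult_le_compat_l; [apply Rdiv_le_0_compat; lra | exact HK]).
  lra.
Qed.

Lemma budget : (exists k, (1 <= k <= N)%nat /\ cut k <= eta k) /\
  sumB N cut eta gap <= 8 * (L ^ 2 * Mgrad) / (INR N + 1) * sumB N cut eta (fun k => INR k).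
Proof.
  apply budget_on_B; [exact HN | | exact gap_sum | exact gap_rejected].
  pose proof Mgrad_nonneg. nra.
Qed.

Lemma accepted_weight_pos : 0 < sumB N cut eta (fun k => INR k).
Proof.
  destruct (proj1 budget) as [k0 [Hk0 HB0]].
  set (p := fun k => if Rle_dec (cut k) (eta k) then INR k else 0).
  assert (Hp : forall k, (1 <= k <= N)%nat -> 0 <= p k)
    by (intros k _; unfold p; destruct (Rle_dec (cut k) (eta k)); [apply pos_INR | lra]).
  assert (Hpk0 : p k0 <> 0).
  { unfold p. destruct (Rle_dec (cut k0) (eta k0)); [| contradiction].
    pose proof (le_INR 1 k0 ltac:(lia)). simpl in *. lra. }
  destruct (sum_to_nonneg N p Hp) as [| Hz]; [exact H |].
  exfalso. exact (Hpk0 (sum_to_zero_inv N p Hp (eq_sym Hz) k0 Hk0)).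
Qed.

Lemma xavg_jensen F : convex_on n X F ->
  X xavg /\ F xavg <= sumB N cut eta (fun k => INR k * F (x k)) / sumB N cut eta (fun k => INR k).
Proof.
  intros HF. apply (jensen_B n X F x N cut eta HX HF); [| exact accepted_weight_pos].
  intros k Hk. apply iterates_in_X; lia.
Qed.

Lemma objective_bound : f xavg - f u <= 8 * L / (INR N + 1) * Kconst.
Proof.
  set (SB := sumB N cut eta (fun k => INR k)).
  pose proof accepted_weight_pos as HSB. fold SB in HSB.
  assert (HN1 : 1 <= INR N) by (apply (le_INR 1 N); lia).
  destruct (xavg_jensen f Hfconv) as [_ Hjen]. fold SB in Hjen.
  assert (Egap : sumB N cut eta gap
                 = L / mu_f * (sumB N cut eta (fun k => INR k * f (x k)) - f u * SB)).
  { transitivity (L / mu_f * sumB N cut eta (fun k => 1 * (INR k * f (x k)) + (- f u) * INR k)).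
    - rewrite <- sumB_scal. apply sumB_ext; intros k _ HB. unfold gap.
      destruct (Rle_dec (cut k) (eta k)); [field; lra | contradiction].
    - rewrite sumB_lin. unfold SB. change (sumB N cut eta INR) with (sumB N cut eta (fun k => INR k)). ring. }
  pose proof (proj2 budget) as Hbud. fold SB in Hbud. rewrite Egap in Hbud.
  assert (Hsum : sumB N cut eta (fun k => INR k * f (x k)) - f u * SB
                 <= 8 * L * mu_f * Mgrad / (INR N + 1) * SB).
  { apply (Rmult_le_reg_l (L / mu_f)); [apply Rdiv_lt_0_compat; lra |].
    replace (L / mu_f * (8 * L * mu_f * Mgrad / (INR N + 1) * SB))
      with (8 * (L ^ 2 * Mgrad) / (INR N + 1) * SB) by (field; lra).
    exact Hbud. }
  assert (HK : 8 * L * mu_f * Mgrad / (INR N + 1) <= 8 * L / (INR N + 1) * Kconst).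
  { unfold Kconst. replace (8 * L * mu_f * Mgrad / (INR N + 1))
      with (8 * L / (INR N + 1) * (mu_f * Mgrad)) by (field; lra).
    apply Rmult_le_compat_l; [apply Rdiv_le_0_compat; lra |].
    apply Rmult_le_compat_r; [apply Mgrad_nonneg | apply Rmax_l]. }
  assert (f xavg - f u <= (sumB N cut eta (fun k => INR k * f (x k)) - f u * SB) / SB).
  { replace ((sumB N cut eta (fun k => INR k * f (x k)) - f u * SB) / SB)
      with (sumB N cut eta (fun k => INR k * f (x k)) / SB - f u) by (field; lra).
    lra. }
  assert ((sumB N cut eta (fun k => INR k * f (x k)) - f u * SB) / SB
          <= 8 * L * mu_f * Mgrad / (INR N + 1)).
  { apply (Rmult_le_reg_r SB); [exact HSB |].
    replace ((sumB N cut eta (fun k => INR k * f (x k)) - f u * SB) / SB * SB)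
      with (sumB N cut eta (fun k => INR k * f (x k)) - f u * SB) by (field; lra).
    exact Hsum. }
  lra.
Qed.

(* Constraint bound: on accepted iterations g(x_k, .) <= G(x_k) = cut_k + eps_k
   <= eta_k + eps_k, and G(xavg) is attained at some delta. *)
Lemma constraint_bound :
  G xavg <= 8 * L / INR N * Kconst
            + sumB N cut eta (fun k => INR k * (G (x k) - g (x k) (delta k)))
              / sumB N cut eta (fun k => INR k).
Proof.
  set (SB := sumB N cut eta (fun k => INR k)).
  pose proof accepted_weight_pos as HSB. fold SB in HSB.
  assert (HN1 : 1 <= INR N) by (apply (le_INR 1 N); lia).
  destruct (xavg_jensen f Hfconv) as [Hxavg _].
  destruct (HG xavg Hxavg) as [[dl [Hdl Edl]] _].
  destruct (xavg_jensen (fun y => g y dl) (Hgconv dl Hdl)) as [_ Hjen].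
  fold SB in Hjen. rewrite Edl in Hjen.
  assert (Hacc : sumB N cut eta (fun k => INR k * g (x k) dl)
                 <= 8 * L / INR N * Kconst * SB
                    + sumB N cut eta (fun k => INR k * (G (x k) - g (x k) (delta k)))).
  { unfold SB. rewrite <- sumB_scal.
    replace (sumB N cut eta (fun k => 8 * L / INR N * Kconst * INR k)
             + sumB N cut eta (fun k => INR k * (G (x k) - g (x k) (delta k))))
      with (sumB N cut eta (fun k => 1 * (8 * L / INR N * Kconst * INR k)
                               + 1 * (INR k * (G (x k) - g (x k) (delta k)))))
      by (rewrite sumB_lin; ring).
    apply sumB_le; intros k Hk HB.
    pose proof (proj2 (HG (x k) (iterates_in_X k ltac:(lia))) dl Hdl) as Hmax.
    cbv beta in Hmax. unfold cut in HB. rewrite Heta in HB by exact Hk.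
    rewrite !Rmult_1_l, (Rmult_comm _ (INR k)), <- Rmult_plus_distr_l.
    apply Rmult_le_compat_l; [apply pos_INR |]. unfold Kconst, Mgrad. lra. }
  apply (Rle_trans _ _ _ Hjen).
  apply (Rmult_le_reg_r SB); [exact HSB |].
  replace (sumB N cut eta (fun k => INR k * g (x k) dl) / SB * SB)
    with (sumB N cut eta (fun k => INR k * g (x k) dl)) by (field; lra).
  replace ((8 * L / INR N * Kconst
            + sumB N cut eta (fun k => INR k * (G (x k) - g (x k) (delta k))) / SB) * SB)
    with (8 * L / INR N * Kconst * SB
          + sumB N cut eta (fun k => INR k * (G (x k) - g (x k) (delta k)))) by (field; lra).
  exact Hacc.
Qed.

(* The paper's weights rho_k = gamma_k / A_k equal k L / mu_f on accepted
   iterations, so the rho-weighted output is the index-weighted average xavg. *)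
Definition astep k :=
  if Rle_dec (cut k) (eta k) then mu_f * gamma k / L else mu_g * gamma k / L.
Definition rho k := gamma k / Aseq astep k.

Lemma rho_accepted k : (1 <= k <= N)%nat -> cut k <= eta k -> rho k = L / mu_f * INR k.
Proof.
  intros Hk HB.
  assert (Hk1 : 1 <= INR k) by (apply (le_INR 1 k); lia).
  assert (Ha : forall j, (1 <= j <= N)%nat -> astep j = 2 / (INR j + 1)).
  { intros j Hj. pose proof (le_INR 1 j ltac:(lia)). simpl in *. unfold astep.
    destruct (Rle_dec (cut j) (eta j)) as [HBj | HBj].
    - destruct (Hstep_f j Hj HBj) as [_ [_ ->]]. field. lra.
    - destruct (Hstep_g j Hj HBj) as [_ [_ ->]]. field. lra. }
  unfold rho. rewrite (Aseq_closed_form astep N Ha k Hk).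
  destruct (Hstep_f k Hk HB) as [_ [_ ->]]. field. lra.
Qed.

Lemma rho_average_eq :
  (fun i => sumB N cut eta (fun k => rho k * x k i) / sumB N cut eta rho) = xavg.
Proof.
  assert (Hscale : forall F, sumB N cut eta (fun k => rho k * F k)
                             = L / mu_f * sumB N cut eta (fun k => INR k * F k)).
  { intros F. rewrite <- sumB_scal. apply sumB_ext; intros k Hk HB.
    rewrite rho_accepted by assumption. ring. }
  assert (Hr : sumB N cut eta rho = L / mu_f * sumB N cut eta (fun k => INR k)).
  { rewrite <- sumB_scal. apply sumB_ext; intros k Hk HB. apply rho_accepted; assumption. }
  apply functional_extensionality; intros i. unfold xavg.
  rewrite (Hscale (fun k => x k i)), Hr.
  apply Rdiv_mult_cancel, Rgt_not_eq, Rdiv_lt_0_compat; lra.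
Qed.

Lemma csa_P2_guarantees :
  let c := fun k => g (x k) (delta k) in
  let a := fun k => if Rle_dec (c k) (eta k) then mu_f * gamma k / L
                    else mu_g * gamma k / L in
  let rho := fun k => gamma k / Aseq a k in
  let xbar : vec := fun i => sumB N c eta (fun k => rho k * x k i) / sumB N c eta rho in
  let eps := fun k => G (x k) - g (x k) (delta k) in
  let K := Rmax mu_f mu_g * Rmax (Lf ^ 2 / mu_f ^ 2) (LgX ^ 2 / mu_g ^ 2) in
  (exists k, (1 <= k <= N)%nat /\ c k <= eta k) /\
  f xbar - f u <= 8 * L / (INR N + 1) * K /\
  G xbar <= 8 * L / INR N * K
            + sumB N c eta (fun k => INR k * eps k) / sumB N c eta (fun k => INR k).
Proof.
  intros c a weights xbar eps K.
  replace xbar with xavg by (symmetry; exact rho_average_eq).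
  exact (conj (proj1 budget) (conj objective_bound constraint_bound)).
Qed.

End CSA_policy_P2.

Theorem mainTheorem2
  (n d : nat) (X Delta : vec -> Prop)
  (f : vec -> R) (g : vec -> vec -> R) (G : vec -> R)
  (Lf LgX LgD mu_f mu_g L : R)
  (w : vec -> R) (gw : vec -> vec)
  (xstar : vec)
  (N : nat) (x delta h : nat -> vec) (eta gamma : nat -> R)
  (* Setting *)
  (HX : convex_set n X) (HXc : seq_compact n X)
  (HD : seq_compact d Delta)
  (HLf : 0 <= Lf) (HLgX : 0 <= LgX) (HLgD : 0 <= LgD)
  (Hfconv : convex_on n X f) (Hflip : lipschitz_on n X f Lf)
  (Hgconv : forall dl, Delta dl -> convex_on n X (fun y => g y dl))
  (HglipX : forall dl, Delta dl -> lipschitz_on n X (fun y => g y dl) LgX)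
  (HglipD : forall y, X y -> lipschitz_on d Delta (fun dl => g y dl) LgD)
  (HG : forall y, X y -> is_max_over Delta (fun dl => g y dl) (G y))
  (Hxstar : X xstar /\ G xstar <= 0 /\ forall y, X y -> G y <= 0 -> f xstar <= f y)
  (Hw : C1_on n X w gw) (Hwsc : one_strongly_convex n X w gw)
  (* Strong convexity assumption *)
  (Hmuf : 0 < mu_f) (Hmug : 0 < mu_g) (HL : 0 < L)
  (Hfsc : strongly_convex_on n X f mu_f)
  (Hgsc : forall dl, Delta dl -> strongly_convex_on n X (fun y => g y dl) mu_g)
  (HVL : forall y z, X y -> X z -> bregV n w gw y z <= L / 2 * (vnorm n (vsub y z)) ^ 2)
  (* Algorithm (inexact CSA) with policy (P2), s = 1 *)
  (HN : (1 <= N)%nat)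
  (Hx1 : X (x 1%nat))
  (Heta : forall k, (1 <= k <= N)%nat ->
     eta k = 8 * L / INR N * (Rmax mu_f mu_g * Rmax (Lf ^ 2 / mu_f ^ 2) (LgX ^ 2 / mu_g ^ 2)))
  (Hdelta : forall k, (1 <= k <= N)%nat -> Delta (delta k))
  (Hstep_f : forall k, (1 <= k <= N)%nat -> g (x k) (delta k) <= eta k ->
     subgrad n X f (x k) (h k) /\ vnorm n (h k) <= Lf /\
     gamma k = 2 * L / (mu_f * (INR k + 1)))
  (Hstep_g : forall k, (1 <= k <= N)%nat -> ~ (g (x k) (delta k) <= eta k) ->
     subgrad n X (fun y => g y (delta k)) (x k) (h k) /\ vnorm n (h k) <= LgX /\
     gamma k = 2 * L / (mu_g * (INR k + 1)))
  (Hprox : forall k, (1 <= k <= N)%nat ->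
     is_prox n X w gw (x k) (fun i => gamma k * h k i) (x (S k))) :
  let c := fun k => g (x k) (delta k) in
  let a := fun k => if Rle_dec (c k) (eta k) then mu_f * gamma k / L
                    else mu_g * gamma k / L in
  let rho := fun k => gamma k / Aseq a k in
  let xbar : vec := fun i => sumB N c eta (fun k => rho k * x k i) / sumB N c eta rho in
  let eps := fun k => G (x k) - g (x k) (delta k) in
  let K := Rmax mu_f mu_g * Rmax (Lf ^ 2 / mu_f ^ 2) (LgX ^ 2 / mu_g ^ 2) in
  (exists k, (1 <= k <= N)%nat /\ c k <= eta k) /\
  f xbar - f xstar <= 8 * L / (INR N + 1) * K /\
  G xbar <= 8 * L / INR N * K
            + sumB N c eta (fun k => INR k * eps k) / sumB N c eta (fun k => INR k).
Proof.
  (* only feasibility of xstar is needed: the bounds hold relative to any feasible point *)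
  destruct Hxstar as [Hxs [HGxs _]].
  apply (csa_P2_guarantees n X Delta f g G Lf LgX mu_f mu_g L w gw xstar N x delta h eta gamma);
    assumption.
Qed.
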